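(* Let $A$ be a threshold graph with $|V(A)|>1$. Then a vertex $t\in V(A)$ is $A$-terminal if and only if $t$ is not $\overline{A}$-terminal. Consequently every two $A$-terminal vertices are nonadjacent, and every two $A$-non-terminal vertices are adjacent.
   Context: A threshold graph is a graph with no induced four-vertex path, four-vertex cycle, or complement of a four-vertex cycle. $\overline{A}$ is the complement graph. In a graph $H$, a vertex $u$ $H$-dominates a vertex $v\ne u$ if $u,v$ are adjacent and every neighbour of $v$ is equal or adjacent to $u$. A vertex $t$ is $H$-non-terminal if there exists $s\in V(H)\setminus\{t\}$ such that $t$ $H$-dominates $s$, and $H$-terminal otherwise. *)

From mathcomp Require Import all_boot.
Set Implicit Arguments. Unset Strict Implicit. Unset Printing Implicit Defensive.

Definition simple_graph (T : finType) (e : rel T) : Prop :=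
  symmetric e /\ irreflexive e.

Definition complement (T : finType) (e : rel T) : rel T :=
  fun x y => (x != y) && ~~ e x y.

Definition distinct4 (T : finType) (a b c d : T) : bool :=
  [&& a != b, a != c, a != d, b != c, b != d & c != d].

Definition induced_P4 (T : finType) (e : rel T) (a b c d : T) : bool :=
  [&& distinct4 a b c d, e a b, e b c, e c d, ~~ e a c, ~~ e b d & ~~ e a d].

Definition induced_C4 (T : finType) (e : rel T) (a b c d : T) : bool :=
  [&& distinct4 a b c d, e a b, e b c, e c d, e d a, ~~ e a c & ~~ e b d].

Definition induced_2K2 (T : finType) (e : rel T) (a b c d : T) : bool :=
  [&& distinct4 a b c d, e a b, e c d, ~~ e a c, ~~ e a d, ~~ e b c & ~~ e b d].

Definition threshold (T : finType) (e : rel T) : Prop :=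
  forall a b c d : T,
    ~~ induced_P4 e a b c d /\ ~~ induced_C4 e a b c d /\ ~~ induced_2K2 e a b c d.

Definition dominates (T : finType) (e : rel T) (u v : T) : Prop :=
  u != v /\ e u v /\ forall w : T, e v w -> w = u \/ e u w.

Definition non_terminal (T : finType) (e : rel T) (t : T) : Prop :=
  exists s : T, s != t /\ dominates e t s.

Definition terminal (T : finType) (e : rel T) (t : T) : Prop :=
  ~ non_terminal e t.

From mathcomp Require Import all_boot.
Set Implicit Arguments. Unset Strict Implicit. Unset Printing Implicit Defensive.

(* Write u >= v when N(v) is contained in N[u] (the vicinal preorder).  In a
   threshold graph any two vertices are comparable: witnesses a in N(v) - N[u]
   and b in N(u) - N[v] would induce a P4, a C4 or a 2K2 together with u, v.
   A vertex t is non-terminal iff t >= s for some neighbour s, and non-terminal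
   in the complement iff s >= t for some non-neighbour s <> t.  In any graph
   both cannot happen at once.  Neither cannot happen either: take a neighbour
   s of t of minimum degree, a witness u of t not >= s, then a witness y of
   u not >= t.  Now y >= s fails as u is in N(s) - N[y], so s >= y by
   comparability, and then the neighbour y of t has smaller degree than s.
   The adjacency claims follow by comparing two vertices in the preorder. *)

Definition vicinal (T : finType) (e : rel T) (u v : T) : Prop :=
  forall w, e v w -> w = u \/ e u w.

Section Vicinal.

Variables (T : finType) (e : rel T).
Hypotheses (e_sym : symmetric e) (e_irr : irreflexive e).

Lemma edge_neq x y : e x y -> x != y.
Proof. by apply: contraTneq => ->; rewrite e_irr. Qed.

Lemma vicinal_or_witness u v :
  vicinal e u v \/ exists w, [/\ e v w, w != u & ~~ e u w].
Proof.
case: (pickP (fun w => [&& e v w, w != u & ~~ e u w])) => [w /and3P[]|none].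
  by right; exists w.
left=> w evw; case: (eqVneq w u) => [|wu]; first by left.
by right; move: (none w); rewrite evw wu /= => /negbFE.
Qed.

Lemma non_terminal_vicinal t :
  non_terminal e t <-> exists2 s, e t s & vicinal e t s.
Proof.
split=> [[s [_ [_ [ets vts]]]]|[s ets vts]]; first by exists s.
by have ts := edge_neq ets; exists s; rewrite eq_sym ts.
Qed.

Lemma non_terminal_complement_vicinal t :
  non_terminal (complement e) t <->
  exists2 s, (s != t) && ~~ e t s & vicinal e s t.
Proof.
split=> [[s [st [_ [/andP[_ nets] dom]]]]|[s /andP[st nets] vst]].
  exists s; first by rewrite st.
  move=> w etw; case: (eqVneq w s) => [|ws]; first by left.
  right; apply: contraTT etw => nesw.
  case: (dom w); first by rewrite /complement eq_sym ws.
    by move=> ->; rewrite e_irr.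
  by case/andP.
exists s; split=> //; split; first by rewrite eq_sym.
split; first by rewrite /complement eq_sym st.
move=> w /andP[sw nesw]; case: (eqVneq w t) => [|wt]; first by left.
right; rewrite /complement eq_sym wt /=.
apply: contraNN nesw => etw.
by case: (vst w etw) => [ws|//]; rewrite ws eqxx in sw.
Qed.

Lemma non_terminal_not_both t :
  non_terminal e t -> ~ non_terminal (complement e) t.
Proof.
case/non_terminal_vicinal=> s1 ets1 vts1.
case/non_terminal_complement_vicinal=> s2 /andP[s2t nets2] vs2t.
case: (vs2t s1 ets1) => [s12|es21]; first by rewrite -s12 ets1 in nets2.
rewrite e_sym in es21.
by case: (vts1 s2 es21) => [s2t'|]; [rewrite s2t' eqxx in s2t | apply/negP].
Qed.

Lemma vicinal_card_lt s y u :
  vicinal e s y -> e s u -> u != y -> ~~ e y u ->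
  #|[set w | e y w]| < #|[set w | e s w]|.
Proof.
move=> vsy esu uy neyu.
have sub : [set w | e y w] :\ s \proper [set w | e s w] :\ y.
  apply/properP; split.
    apply/subsetP=> w; rewrite !inE => /andP[ws eyw].
    case: (vsy w eyw) => [/eqP|->]; first by rewrite (negbTE ws).
    by rewrite andbT; apply: contraTneq eyw => ->; rewrite e_irr.
  by exists u; rewrite !inE ?uy ?esu // (negbTE neyu) andbF.
rewrite (cardsD1 s [set w | e y w]) (cardsD1 y [set w | e s w]) !inE e_sym.
by rewrite ltn_add2l proper_card.
Qed.

Hypothesis e_threshold : threshold e.

Lemma threshold_no_crossing u v a b :
  u != v -> e v a -> a != u -> ~~ e u a -> e u b -> b != v -> ~~ e v b -> False.
Proof.
move=> uv eva au neua eub bv nevb.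
have av : a != v by rewrite eq_sym edge_neq.
have bu : b != u by rewrite eq_sym edge_neq.
have ab : a != b by apply: contraNneq nevb => <-.
have [noP4 [noC4 no2K2]] := e_threshold u v a b.
case: (boolP (e u v)) => euv; case: (boolP (e a b)) => eab.
- move/negP: noC4; apply; rewrite /induced_C4 /distinct4.
  by rewrite uv (eq_sym u a) au (eq_sym u b) bu (eq_sym v a) av (eq_sym v b) bv ab
    euv eva eab (e_sym b u) eub neua nevb.
- have [noP4' _] := e_threshold a v u b.
  move/negP: noP4'; apply; rewrite /induced_P4 /distinct4.
  by rewrite av au ab (eq_sym v u) uv (eq_sym v b) bv (eq_sym u b) bu
    (e_sym a v) eva (e_sym v u) euv eub (e_sym a u) neua nevb eab.
- have [noP4' _] := e_threshold v a b u.
  move/negP: noP4'; apply; rewrite /induced_P4 /distinct4.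
  by rewrite (eq_sym v a) av (eq_sym v b) bv (eq_sym v u) uv ab au bu
    eva eab (e_sym b u) eub nevb (e_sym a u) neua (e_sym v u) euv.
- have [_ [_ no2K2']] := e_threshold v a u b.
  move/negP: no2K2'; apply; rewrite /induced_2K2 /distinct4.
  by rewrite (eq_sym v a) av (eq_sym v u) uv (eq_sym v b) bv au ab (eq_sym u b) bu
    eva eub (e_sym v u) euv nevb (e_sym a u) neua eab.
Qed.

Lemma vicinal_total u v : u != v -> vicinal e u v \/ vicinal e v u.
Proof.
move=> uv.
case: (vicinal_or_witness u v) => [|[a [eva au neua]]]; first by left.
case: (vicinal_or_witness v u) => [|[b [eub bv nevb]]]; first by right.
by case: (threshold_no_crossing uv eva au neua eub bv nevb).
Qed.

Lemma terminal_not_both t :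
  1 < #|T| -> terminal e t -> ~ terminal (complement e) t.
Proof.
move=> card_gt1 Tt Tct.
have vicinal_t s : e t s -> ~ vicinal e t s.
  by move=> ets vts; apply: Tt; apply/non_terminal_vicinal; exists s.
have vicinal_ct s : s != t -> ~~ e t s -> ~ vicinal e s t.
  move=> st nets vst; apply: Tct; apply/non_terminal_complement_vicinal.
  by exists s; rewrite ?st.
have witness_ct s : s != t -> ~~ e t s ->
    exists y, [/\ e t y, y != s & ~~ e s y].
  move=> st nets.
  by case: (vicinal_or_witness s t) => // /(vicinal_ct s st nets).
have [s0 ets0] : exists s0, e t s0.
  have : 0 < #|[set~ t]| by rewrite cardsC1 -subn1 subn_gt0.
  case/card_gt0P=> v; rewrite !inE => vt.
  case: (boolP (e t v)) => [etv|netv]; first by exists v.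
  by have [y [ety _ _]] := witness_ct v vt netv; exists y.
case: (arg_minnP (fun s => #|[set w | e s w]|) ets0) => s ets s_min.
have [u [esu ut netu]] : exists u, [/\ e s u, u != t & ~~ e t u].
  by case: (vicinal_or_witness t s) => // /(vicinal_t s ets).
have [y [ety yu neuy]] := witness_ct u ut netu.
have neyu : ~~ e y u by rewrite e_sym.
have sy : s != y by apply: contraNneq neuy => <-; rewrite e_sym.
case: (vicinal_total sy) => [vsy|vys].
  by have := s_min y ety; rewrite leqNgt (vicinal_card_lt vsy esu) // eq_sym.
by case: (vys u esu) => [/eqP|eyu]; [rewrite eq_sym (negbTE yu) | rewrite eyu in neyu].
Qed.

End Vicinal.

Theorem mainTheorem15 (T : finType) (e : rel T) :
  simple_graph e -> threshold e -> 1 < #|T| ->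
  (forall t : T, terminal e t <-> ~ terminal (complement e) t) /\
  (forall s t : T, s != t -> terminal e s -> terminal e t -> ~~ e s t) /\
  (forall s t : T, s != t -> non_terminal e s -> non_terminal e t -> e s t).
Proof.
move=> [e_sym e_irr] e_thr card_gt1; split; last split.
- move=> t; split; first exact: terminal_not_both.
  by move=> nTct NTt; apply: nTct; apply: non_terminal_not_both.
- move=> s t st Ts Tt; apply/negP=> est.
  case: (vicinal_total e_sym e_irr e_thr st) => [vst|vts].
    by apply: Ts; apply/(non_terminal_vicinal e_irr); exists t.
  by apply: Tt; apply/(non_terminal_vicinal e_irr); exists s; rewrite // e_sym.
- move=> s t st NTs NTt; apply/negPn/negP=> nest.
  case: (vicinal_total e_sym e_irr e_thr st) => [vst|vts].
    apply: (non_terminal_not_both e_sym e_irr NTt).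
    by apply/(non_terminal_complement_vicinal e_irr); exists s; rewrite // st e_sym nest.
  apply: (non_terminal_not_both e_sym e_irr NTs).
  by apply/(non_terminal_complement_vicinal e_irr); exists t; rewrite // eq_sym st nest.
Qed.
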